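(* Fix $\beta>2$ and let $G_\beta,H_\beta,K_\beta,g_\beta$ and $F_\beta(\mathbf{x},r)$ be as in the context. For every $r>0$, the equation $$H_\beta(y-3r/2)+H_\beta(y)+K_\beta(y)=1,\qquad y\in(-\infty,g_\beta],$$ has a unique solution $y_2^\beta(r)$. Furthermore, the point $\big(H_\beta(y_2^\beta(r)),K_\beta(y_2^\beta(r))\big)$ is a local minimum of $F_\beta(\cdot,r)$.
   Context: $\Xi=\{(x_1,x_2): x_1,x_2\ge0,\ x_1+x_2\le1\}$, $x_0=1-x_1-x_2$, $\mathbf{v}_k=(\cos(2\pi k/3),\sin(2\pi k/3))$, and $F_\beta(\mathbf{x},r)=-\frac12|\sum_{k=0}^2x_k\mathbf{v}_k|^2+\frac1\beta\sum_{k=0}^2x_k\log(3x_k)+r\,x_0-\frac r2(x_1+x_2)$ (potential with external field of magnitude $r$, angle $\pi$). $G_\beta(x)=\frac1\beta\log x-\frac32x$ on $(0,\infty)$, $l_\beta=2/(3\beta)$, $g_\beta=G_\beta(l_\beta)$; for $y<g_\beta$, $H_\beta(y)<l_\beta<K_\beta(y)$ are the two solutions of $G_\beta(x)=y$, and $H_\beta(g_\beta)=K_\beta(g_\beta)=l_\beta$. *)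

From Stdlib Require Import Reals Lra ClassicalEpsilon.
Open Scope R_scope.

Definition G_beta (beta x : R) : R := / beta * ln x - 3 / 2 * x.
Definition l_beta (beta : R) : R := 2 / (3 * beta).
Definition g_beta (beta : R) : R := G_beta beta (l_beta beta).

Definition H_beta (beta y : R) : R :=
  epsilon (inhabits 0) (fun x => 0 < x <= l_beta beta /\ G_beta beta x = y).
Definition K_beta (beta y : R) : R :=
  epsilon (inhabits 0) (fun x => l_beta beta <= x /\ G_beta beta x = y).

Definition in_Xi (x1 x2 : R) : Prop := 0 <= x1 /\ 0 <= x2 /\ x1 + x2 <= 1.

Definition vx (k : R) : R := cos (2 * PI * k / 3).
Definition vy (k : R) : R := sin (2 * PI * k / 3).

(* x log(3x), with the convention 0 log 0 = 0 (Stdlib ln 0 = 0) *)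
Definition xlog3x (x : R) : R := x * ln (3 * x).

Definition F_beta (beta x1 x2 r : R) : R :=
  let x0 := 1 - x1 - x2 in
  let sx := x0 * vx 0 + x1 * vx 1 + x2 * vx 2 in
  let sy := x0 * vy 0 + x1 * vy 1 + x2 * vy 2 in
  - / 2 * (sx ^ 2 + sy ^ 2)
  + / beta * (xlog3x x0 + xlog3x x1 + xlog3x x2)
  + r * x0 - r / 2 * (x1 + x2).

Definition local_min_F (beta r p1 p2 : R) : Prop :=
  in_Xi p1 p2 /\
  exists eps, 0 < eps /\
    forall x1 x2, in_Xi x1 x2 -> (x1 - p1) ^ 2 + (x2 - p2) ^ 2 < eps ^ 2 ->
      F_beta beta p1 p2 r <= F_beta beta x1 x2 r.

From Stdlib Require Import Reals Lra Classical ClassicalEpsilon.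
From Coquelicot Require Import Coquelicot.
Open Scope R_scope.

(* Write [p0 = H (y - 3r/2)], [p1 = H y], [p2 = K y] and [l = l_beta].  Since
   [G' x = 1/(beta x) - 3/2 = 3 (l - x) / (2 x)], the sum [p0 + p1 + p2] has derivative
   [sum_k 1 / G' p_k = 2/3 sum_k p_k / (l - p_k)] in [y].  At every solution of
   [p0 + p1 + p2 = 1] this is negative: for [p1 <= l/3] by inspecting signs, while
   [p1 > l/3] is excluded by [ln s - ln (3 - 2 s) >= 3 s - 3] on [[1/3, 1]].  So the sum
   only crosses the level 1 downwards and has at most one root; it has one since the sum
   exceeds 1 at [y = G 1] and is below [3 l < 1] at [y = g].  All of this is done with
   secant slopes of [G], so that no derivative of [H] or [K] is needed.
   The root is a critical point of [F] on the simplex, and near it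
   [F x - F p >= 1/2 sum_k G' (p_k + eta) (x_k - p_k)^2].  This quadratic form has two
   positive and one negative coefficient whose reciprocals have negative sum (the same
   sign condition as above), hence is nonnegative on [sum_k (x_k - p_k) = 0]. *)

Lemma ln_lt_sub1 z : 0 < z -> z <> 1 -> ln z < z - 1.
Proof.
  intros hz hz1.
  assert (hln : ln z <> 0) by (intro e; apply hz1; rewrite <- (exp_ln z hz), e; apply exp_0).
  generalize (exp_ineq1 _ hln); rewrite exp_ln by lra; lra.
Qed.

Lemma ln_sub_bounds x z : 0 < x < z -> (z - x) / z < ln z - ln x < (z - x) / x.
Proof.
  intros [hx hxz].
  assert (hxz1 : 0 < x / z < 1).
  { split; [apply Rdiv_lt_0_compat; lra|].
    apply Rmult_lt_reg_r with z; [lra|]; field_simplify; lra. }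
  assert (hzx1 : 1 < z / x).
  { apply Rmult_lt_reg_r with x; [lra|]; field_simplify; lra. }
  assert (h1 := ln_lt_sub1 (x / z) ltac:(lra) ltac:(lra)).
  assert (h2 := ln_lt_sub1 (z / x) ltac:(lra) ltac:(lra)).
  rewrite ln_div in h1, h2 by lra.
  replace ((z - x) / z) with (1 - x / z) by (field; lra).
  replace ((z - x) / x) with (z / x - 1) by (field; lra).
  lra.
Qed.

Lemma le_of_derive_nonneg (f f' : R -> R) a c :
  a <= c ->
  (forall x, a <= x <= c -> derivable_pt_lim f x (f' x)) ->
  (forall x, a < x < c -> 0 <= f' x) -> f a <= f c.
Proof.
  intros hac hd hpos.
  destruct (Req_dec a c) as [<-|hne]; [lra|].
  destruct (MVT_cor2 f f' a c) as [x [e hx]]; [lra|auto|].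
  specialize (hpos x hx); nra.
Qed.

Lemma ln_ge_of_ge1 z : 1 <= z -> 2 * (z - 1) / (z + 1) <= ln z.
Proof.
  intros hz.
  enough (0 - 2 * (1 - 1) / (1 + 1) <= ln z - 2 * (z - 1) / (z + 1)) by lra.
  rewrite <- ln_1 at 1.
  apply (le_of_derive_nonneg (fun z => ln z - 2 * (z - 1) / (z + 1))
           (fun z => / z - 4 / (z + 1) ^ 2)); [lra| |].
  - intros x hx; apply is_derive_Reals; auto_derive; [lra|field; lra].
  - intros x hx.
    replace (/ x - 4 / (x + 1) ^ 2) with ((x - 1) ^ 2 / (x * (x + 1) ^ 2)) by (field; lra).
    apply Rdiv_le_0_compat; nra.
Qed.

Lemma ln_ge_of_le1 z : 0 < z <= 1 -> (z - / z) / 2 <= ln z.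
Proof.
  intros hz.
  enough ((z - / z) / 2 - ln z <= (1 - / 1) / 2 - 0) by lra.
  rewrite <- ln_1 at 1.
  apply (le_of_derive_nonneg (fun z => (z - / z) / 2 - ln z)
           (fun z => (1 + / z ^ 2) / 2 - / z)); [lra| |].
  - intros x hx; apply is_derive_Reals; auto_derive; [lra|field; lra].
  - intros x hx.
    replace ((1 + / x ^ 2) / 2 - / x) with ((x - 1) ^ 2 / (2 * x ^ 2)) by (field; lra).
    apply Rdiv_le_0_compat; nra.
Qed.

(* [x (ln x - ln p) - (x - p)] is the Bregman divergence of [x ln x]. *)
Lemma xlnx_divergence_ge x p d : 0 < x -> 0 < p -> Rabs (x - p) <= d ->
  (x - p) ^ 2 / (2 * (p + d)) <= x * (ln x - ln p) - (x - p).
Proof.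
  intros hx hp hd. rewrite <- ln_div by lra.
  assert (hq : 0 < x / p) by (apply Rdiv_lt_0_compat; lra).
  destruct (Rle_dec p x) as [hpx|hpx].
  - rewrite Rabs_right in hd by lra.
    assert (hq1 : 1 <= x / p)
      by (apply Rmult_le_reg_r with p; [lra|field_simplify; lra]).
    assert (h := ln_ge_of_ge1 (x / p) hq1).
    replace (2 * (x / p - 1) / (x / p + 1)) with (2 * (x - p) / (x + p)) in h by (field; lra).
    assert ((x - p) ^ 2 / (2 * (p + d)) <= (x - p) ^ 2 / (x + p)).
    { apply Rmult_le_compat_l; [nra|apply Rinv_le_contravar; lra]. }
    assert (x * (2 * (x - p) / (x + p)) - (x - p) = (x - p) ^ 2 / (x + p)) by (field; lra).
    nra.
  - rewrite Rabs_left in hd by lra.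
    assert (hq1 : x / p <= 1)
      by (apply Rmult_le_reg_r with p; [lra|field_simplify; lra]).
    assert (h := ln_ge_of_le1 (x / p) (conj hq hq1)).
    replace ((x / p - / (x / p)) / 2) with ((x * x - p * p) / (2 * x * p)) in h by (field; lra).
    assert ((x - p) ^ 2 / (2 * (p + d)) <= (x - p) ^ 2 / (2 * p)).
    { apply Rmult_le_compat_l; [nra|apply Rinv_le_contravar; lra]. }
    assert (x * ((x * x - p * p) / (2 * x * p)) - (x - p) = (x - p) ^ 2 / (2 * p))
      by (field; lra).
    nra.
Qed.

Lemma ln_7_lt_2 : ln 7 < 2.
Proof.
  rewrite <- (ln_exp 2); apply ln_increasing; [lra|].
  assert (h : 1 + 1 / 32 < exp (1 / 32)) by (apply exp_ineq1; lra).
  assert (e : exp 2 = exp (1 / 32) ^ 64).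
  { rewrite <- Rpower_pow by apply exp_pos.
    unfold Rpower; rewrite ln_exp; f_equal; simpl; lra. }
  rewrite e.
  apply Rlt_le_trans with ((1 + 1 / 32) ^ 64); [lra|apply pow_incr; lra].
Qed.

(* [m s = ln s - ln (3 - 2 s) - 3 s + 3] increases on [[1/3, 1/2]] and decreases on
   [[1/2, 1]], with [m 1 = 0] and [m (1/3) = 2 - ln 7 > 0]. *)
Lemma ln_sub_ln_three_sub_ge s : 1 / 3 <= s <= 1 -> 3 * s - 3 <= ln s - ln (3 - 2 * s).
Proof.
  intros hs.
  set (m := fun s => ln s - ln (3 - 2 * s) - 3 * s + 3).
  set (m' := fun s => 3 * (2 * s - 1) * (s - 1) / (s * (3 - 2 * s))).
  assert (hd : forall x, 1 / 3 <= x <= 1 -> derivable_pt_lim m x (m' x)).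
  { intros x hx; apply is_derive_Reals; unfold m, m'; auto_derive; [lra|field; lra]. }
  enough (0 <= m s) by (unfold m in *; lra).
  destruct (Rle_dec (1 / 2) s) as [hs2|hs2].
  - assert (m 1 = 0) by (unfold m; replace (3 - 2 * 1) with 1 by lra; rewrite ln_1; lra).
    enough (- m s <= - m 1) by lra.
    apply (le_of_derive_nonneg (fun x => - m x) (fun x => - m' x)); [lra| |].
    + intros x hx; apply derivable_pt_lim_opp, hd; lra.
    + intros x hx; unfold m'.
      replace (- (3 * (2 * x - 1) * (x - 1) / (x * (3 - 2 * x))))
        with (3 * (2 * x - 1) * (1 - x) / (x * (3 - 2 * x))) by (field; lra).
      apply Rdiv_le_0_compat; [apply Rmult_le_pos|apply Rmult_lt_0_compat]; lra.
  - assert (m (1 / 3) = 2 - ln 7).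
    { unfold m; rewrite <- ln_div by lra.
      replace (1 / 3 / (3 - 2 * (1 / 3))) with (/ 7) by field.
      rewrite ln_Rinv by lra; lra. }
    enough (m (1 / 3) <= m s) by (generalize ln_7_lt_2; lra).
    apply (le_of_derive_nonneg m m'); [lra| |].
    + intros x hx; apply hd; lra.
    + intros x hx; unfold m'.
      replace (3 * (2 * x - 1) * (x - 1)) with (3 * (1 - 2 * x) * (1 - x)) by ring.
      apply Rdiv_le_0_compat; [apply Rmult_le_pos|apply Rmult_lt_0_compat]; lra.
Qed.

Lemma lt_Rmin3 x a b c : x < Rmin a (Rmin b c) -> x < a /\ x < b /\ x < c.
Proof.
  intros h; generalize (Rmin_l a (Rmin b c)) (Rmin_r a (Rmin b c)) (Rmin_l b c) (Rmin_r b c).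
  lra.
Qed.

Definition continuous_in (D : R -> Prop) (f : R -> R) : Prop :=
  forall x, D x -> forall eps, 0 < eps -> exists del, 0 < del /\
    forall y, D y -> Rabs (y - x) < del -> Rabs (f y - f x) < eps.

Lemma continuous_in_subset D E f :
  (forall x, E x -> D x) -> continuous_in D f -> continuous_in E f.
Proof.
  intros hED hf x hx eps heps.
  destruct (hf x (hED x hx) eps heps) as [d [hd hd']].
  exists d; split; auto.
Qed.

Lemma continuous_in_of_continuity_pt D f :
  (forall x, D x -> continuity_pt f x) -> continuous_in D f.
Proof.
  intros hf x hx eps heps.
  destruct (hf x hx eps heps) as [d [hd hd']].
  exists d; split; auto. intros y _ hy.
  destruct (Req_dec x y) as [<-|hne].
  - rewrite Rminus_diag, Rabs_R0; lra.
  - apply (hd' y); repeat split; auto.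
Qed.

Lemma continuous_in_opp D f : continuous_in D f -> continuous_in D (fun x => - f x).
Proof.
  intros hf x hx eps heps.
  destruct (hf x hx eps heps) as [d [hd hd']].
  exists d; split; auto. intros y hy hyx.
  replace (- f y - - f x) with (- (f y - f x)) by ring.
  rewrite Rabs_Ropp; auto.
Qed.

Lemma continuous_in_plus D f g :
  continuous_in D f -> continuous_in D g -> continuous_in D (fun x => f x + g x).
Proof.
  intros hf hg x hx eps heps.
  destruct (hf x hx (eps / 2) ltac:(lra)) as [d1 [hd1 h1]].
  destruct (hg x hx (eps / 2) ltac:(lra)) as [d2 [hd2 h2]].
  exists (Rmin d1 d2); split; [apply Rmin_glb_lt; auto|].
  intros y hy hyx.
  specialize (h1 y hy (Rlt_le_trans _ _ _ hyx (Rmin_l _ _))).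
  specialize (h2 y hy (Rlt_le_trans _ _ _ hyx (Rmin_r _ _))).
  rewrite Rabs_lt_between in h1, h2 |- *; lra.
Qed.

Lemma continuous_in_shift D E f c :
  (forall y, E y -> D (y - c)) -> continuous_in D f -> continuous_in E (fun y => f (y - c)).
Proof.
  intros hED hf x hx eps heps.
  destruct (hf (x - c) (hED x hx) eps heps) as [d [hd hd']].
  exists d; split; auto. intros y hy hyx.
  apply hd'; auto. replace (y - c - (x - c)) with (y - x) by ring; auto.
Qed.

Lemma continuous_in_reflect D f :
  continuous_in (fun y => D (- y)) (fun y => f (- y)) -> continuous_in D f.
Proof.
  intros hf x hx eps heps.
  destruct (hf (- x) ltac:(cbv beta; rewrite Ropp_involutive; auto) eps heps) as [d [hd hd']].
  exists d; split; auto. intros y hy hyx.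
  specialize (hd' (- y)); cbv beta in hd'; rewrite !Ropp_involutive in hd'.
  apply hd'; auto. replace (- y - - x) with (- (y - x)) by ring; rewrite Rabs_Ropp; auto.
Qed.

Lemma continuous_in_lt D f x c : continuous_in D f -> D x -> f x < c ->
  exists del, 0 < del /\ forall y, D y -> Rabs (y - x) < del -> f y < c.
Proof.
  intros hf hx hlt.
  destruct (hf x hx (c - f x) ltac:(lra)) as [d [hd hd']].
  exists d; split; auto. intros y hy hyx.
  specialize (hd' y hy hyx); rewrite Rabs_lt_between in hd'; lra.
Qed.

Lemma continuous_in_gt D f x c : continuous_in D f -> D x -> c < f x ->
  exists del, 0 < del /\ forall y, D y -> Rabs (y - x) < del -> c < f y.
Proof.
  intros hf hx hlt.
  destruct (continuous_in_lt D (fun x => - f x) x (- c) (continuous_in_opp D f hf) hx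
              ltac:(lra)) as [d [hd hd']].
  exists d; split; auto. intros y hy hyx. specialize (hd' y hy hyx); lra.
Qed.

Lemma inverse_continuous_in (f h : R -> R) (I D : R -> Prop) :
  (forall x z w, I x -> I z -> x <= w <= z -> I w) ->
  (forall x z, I x -> I z -> x < z -> f x < f z) ->
  (forall y, D y -> I (h y) /\ f (h y) = y) ->
  continuous_in D h.
Proof.
  intros hI hf hh y0 hy0 eps heps.
  destruct (hh y0 hy0) as [hx0 hfx0].
  assert (hle : forall x z, I x -> I z -> x <= z -> f x <= f z).
  { intros x z hx hz [hxz|<-]; [left; apply hf|right]; auto. }
  assert (lower : exists d, 0 < d /\
            forall y, D y -> Rabs (y - y0) < d -> h y0 - eps < h y).
  { destruct (classic (I (h y0 - eps))) as [hw|hw].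
    - assert (f (h y0 - eps) < f (h y0)) by (apply hf; auto; lra).
      exists (y0 - f (h y0 - eps)); split; [lra|].
      intros y hy hyd; destruct (hh y hy) as [hxy hfy].
      apply Rnot_le_lt; intro hyle.
      assert (f (h y) <= f (h y0 - eps)) by (apply hle; auto).
      rewrite Rabs_lt_between in hyd; lra.
    - exists 1; split; [lra|]. intros y hy _; destruct (hh y hy) as [hxy _].
      apply Rnot_le_lt; intro hyle. apply hw, (hI (h y) (h y0)); auto; lra. }
  assert (upper : exists d, 0 < d /\
            forall y, D y -> Rabs (y - y0) < d -> h y < h y0 + eps).
  { destruct (classic (I (h y0 + eps))) as [hw|hw].
    - assert (f (h y0) < f (h y0 + eps)) by (apply hf; auto; lra).
      exists (f (h y0 + eps) - y0); split; [lra|].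
      intros y hy hyd; destruct (hh y hy) as [hxy hfy].
      apply Rnot_le_lt; intro hyle.
      assert (f (h y0 + eps) <= f (h y)) by (apply hle; auto).
      rewrite Rabs_lt_between in hyd; lra.
    - exists 1; split; [lra|]. intros y hy _; destruct (hh y hy) as [hxy _].
      apply Rnot_le_lt; intro hyle. apply hw, (hI (h y0) (h y)); auto; lra. }
  destruct lower as [d1 [hd1 h1]], upper as [d2 [hd2 h2]].
  exists (Rmin d1 d2); split; [apply Rmin_glb_lt; auto|].
  intros y hy hyd.
  specialize (h1 y hy (Rlt_le_trans _ _ _ hyd (Rmin_l _ _))).
  specialize (h2 y hy (Rlt_le_trans _ _ _ hyd (Rmin_r _ _))).
  rewrite Rabs_lt_between; lra.
Qed.

Lemma inverse_continuous_in_decr (f h : R -> R) (I D : R -> Prop) :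
  (forall x z w, I x -> I z -> x <= w <= z -> I w) ->
  (forall x z, I x -> I z -> x < z -> f z < f x) ->
  (forall y, D y -> I (h y) /\ f (h y) = y) ->
  continuous_in D h.
Proof.
  intros hI hf hh. apply continuous_in_reflect.
  apply (inverse_continuous_in (fun x => - f x) _ I); auto.
  - intros x z hx hz hxz; specialize (hf x z hx hz hxz); lra.
  - intros y hy; destruct (hh (- y) hy) as [hI' hf']; split; auto; lra.
Qed.

(* [z] is the supremum of the [y] such that [f < c] on [[u, y]]. *)
Lemma first_crossing (f : R -> R) u v c :
  u <= v -> continuous_in (fun x => u <= x <= v) f -> f u < c -> c <= f v ->
  exists z, u < z <= v /\ f z = c /\ (forall w, u <= w < z -> f w < c).
Proof.
  intros huv hf hu hv.
  set (E := fun y => u <= y <= v /\ forall w, u <= w <= y -> f w < c).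
  assert (hEu : E u) by (split; [lra|intros w hw; replace w with u by lra; auto]).
  destruct (completeness E) as [z [hzub hzlub]].
  { exists v; intros y [hy _]; lra. }
  { exists u; auto. }
  assert (huz : u <= z) by (apply hzub; auto).
  assert (hzv : z <= v) by (apply hzlub; intros y [hy _]; lra).
  assert (hbelow : forall w, u <= w < z -> f w < c).
  { intros w hw. apply Rnot_le_lt; intro hcw.
    assert (hzw : z <= w); [|lra].
    apply hzlub; intros y [hy hyf]. apply Rnot_lt_le; intro hwy.
    specialize (hyf w ltac:(lra)); lra. }
  assert (hfz : ~ f z < c).
  { intro hlt.
    assert (hzv' : z < v) by (destruct (Req_dec z v) as [->|]; lra).
    destruct (continuous_in_lt _ f z c hf ltac:(lra) hlt) as [d [hd hd']].
    set (z' := Rmin v (z + d / 2)).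
    assert (z < z' <= v) by (unfold z'; split; [apply Rmin_glb_lt|apply Rmin_l]; lra).
    assert (z' <= z + d / 2) by apply Rmin_r.
    assert (z' <= z); [|lra].
    apply hzub; split; [lra|]. intros w hw.
    destruct (Rlt_le_dec w z); [apply hbelow; lra|].
    apply hd'; [lra|rewrite Rabs_right; lra]. }
  assert (huz' : u < z) by (destruct (Req_dec u z) as [<-|]; lra).
  assert (hfz' : ~ c < f z).
  { intro hlt.
    destruct (continuous_in_gt _ f z c hf ltac:(lra) hlt) as [d [hd hd']].
    set (w := Rmax u (z - d / 2)).
    assert (u <= w < z) by (unfold w; split; [apply Rmax_l|apply Rmax_lub_lt]; lra).
    assert (z - d / 2 <= w) by apply Rmax_r.
    specialize (hbelow w ltac:(lra)).
    specialize (hd' w ltac:(lra) ltac:(rewrite Rabs_left; lra)); lra. }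
  exists z; split; [lra|split; [lra|auto]].
Qed.

Lemma weighted_squares_nonneg e0 e1 e2 h0 h1 h2 :
  0 < e0 -> 0 < e1 -> e2 < 0 -> / e0 + / e1 + / e2 < 0 -> h0 + h1 + h2 = 0 ->
  0 <= e0 * h0 ^ 2 + e1 * h1 ^ 2 + e2 * h2 ^ 2.
Proof.
  intros he0 he1 he2 hinv hsum.
  (* [N] is the determinant of the form in [(h0, h1)] after eliminating [h2]. *)
  set (N := e0 * e1 + e2 * (e0 + e1)).
  assert (eN : N = (/ e0 + / e1 + / e2) * (e0 * e1 * e2)) by (unfold N; field; lra).
  assert (hN : 0 < N).
  { assert (0 < e0 * e1) by nra.
    assert (e0 * e1 * e2 < 0) by nra.
    rewrite eN; nra. }
  assert (he02 : 0 < e0 + e2).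
  { apply Rnot_le_lt; intro hle.
    assert (e1 * (e0 + e2) <= 0) by nra.
    assert (e2 * e0 < 0) by nra.
    unfold N in hN; lra. }
  replace h2 with (- (h0 + h1)) by lra.
  apply Rmult_le_reg_l with (e0 + e2); [lra|].
  replace ((e0 + e2) * (e0 * h0 ^ 2 + e1 * h1 ^ 2 + e2 * (- (h0 + h1)) ^ 2))
    with (((e0 + e2) * h0 + e2 * h1) ^ 2 + N * h1 ^ 2) by (unfold N; ring).
  assert (0 <= ((e0 + e2) * h0 + e2 * h1) ^ 2) by apply pow2_ge_0.
  assert (0 <= N * h1 ^ 2) by (apply Rmult_le_pos; [lra|apply pow2_ge_0]).
  lra.
Qed.

Lemma vx_vy_values :
  vx 0 = 1 /\ vy 0 = 0 /\ vx 1 = - 1 / 2 /\ vy 1 = sqrt 3 / 2 /\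
  vx 2 = - 1 / 2 /\ vy 2 = - (sqrt 3 / 2).
Proof.
  unfold vx, vy.
  replace (2 * PI * 0 / 3) with 0 by field.
  replace (2 * PI * 1 / 3) with (PI - PI / 3) by field.
  replace (2 * PI * 2 / 3) with (PI / 3 + PI) by field.
  rewrite cos_0, sin_0, Rtrigo_facts.cos_pi_minus, sin_PI_x, neg_cos, neg_sin, cos_PI3, sin_PI3.
  repeat split; field.
Qed.

Lemma F_beta_eq beta x1 x2 r : 0 < 1 - x1 - x2 -> 0 < x1 -> 0 < x2 ->
  F_beta beta x1 x2 r =
    - 3 / 4 * ((1 - x1 - x2) ^ 2 + x1 ^ 2 + x2 ^ 2) + 1 / 4
    + / beta * (ln 3 + (1 - x1 - x2) * ln (1 - x1 - x2) + x1 * ln x1 + x2 * ln x2)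
    + r * (1 - x1 - x2) - r / 2 * (x1 + x2).
Proof.
  intros hx0 hx1 hx2.
  destruct vx_vy_values as [v0 [w0 [v1 [w1 [v2 w2]]]]].
  unfold F_beta, xlog3x; cbv zeta; rewrite v0, w0, v1, w1, v2, w2, !ln_mult by lra.
  assert (hs : sqrt 3 * sqrt 3 = 3) by (apply sqrt_sqrt; lra).
  replace ((1 - x1 - x2) * 0 + x1 * (sqrt 3 / 2) + x2 * - (sqrt 3 / 2))
    with (sqrt 3 / 2 * (x1 - x2)) by ring.
  replace ((sqrt 3 / 2 * (x1 - x2)) ^ 2) with (sqrt 3 * sqrt 3 / 4 * (x1 - x2) ^ 2) by field.
  (* With [/ beta] as an atom, [field] needs no [beta <> 0]. *)
  rewrite hs; set (ib := / beta); field.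
Qed.

Section Potential.

Variable beta : R.
Hypothesis hbeta : 2 < beta.

Local Notation G := (G_beta beta).
Local Notation l := (l_beta beta).
Local Notation g := (g_beta beta).

Definition G_deriv (x : R) : R := / (beta * x) - 3 / 2.

Lemma l_beta_pos : 0 < l.
Proof. unfold l_beta; apply Rdiv_lt_0_compat; lra. Qed.

Lemma three_l_beta_lt_1 : 3 * l < 1.
Proof.
  unfold l_beta; replace (3 * (2 / (3 * beta))) with (2 / beta) by (field; lra).
  apply Rmult_lt_reg_r with beta; [lra|]; field_simplify; lra.
Qed.

Lemma inv_beta_eq : / beta = 3 / 2 * l.
Proof. unfold l_beta; field; lra. Qed.

Lemma G_deriv_eq x : 0 < x -> G_deriv x = 3 * (l - x) / (2 * x).
Proof. intros hx; unfold G_deriv, l_beta; field; lra. Qed.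

Lemma inv_G_deriv x : 0 < x -> x <> l -> / G_deriv x = 2 * x / (3 * (l - x)).
Proof.
  intros hx hxl; rewrite G_deriv_eq by lra; field.
  repeat split; lra.
Qed.

Lemma G_deriv_pos x : 0 < x < l -> 0 < G_deriv x.
Proof.
  intros hx; rewrite G_deriv_eq by lra; apply Rdiv_lt_0_compat; lra.
Qed.

Lemma G_deriv_neg x : l < x -> G_deriv x < 0.
Proof.
  intros hx; assert (hl := l_beta_pos).
  rewrite G_deriv_eq by lra; apply Rdiv_neg_pos; lra.
Qed.

Lemma G_deriv_decreasing x z : 0 < x < z -> G_deriv z < G_deriv x.
Proof.
  intros hxz; unfold G_deriv.
  assert (/ (beta * z) < / (beta * x)); [|lra].
  apply Rinv_lt_contravar; [apply Rmult_lt_0_compat; nra|]; nra.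
Qed.

Lemma G_secant_bounds x z : 0 < x < z ->
  (z - x) * G_deriv z < G z - G x < (z - x) * G_deriv x.
Proof.
  intros hxz; destruct (ln_sub_bounds x z hxz) as [hlo hhi].
  assert (hb : 0 < / beta) by (apply Rinv_0_lt_compat; lra).
  unfold G_beta, G_deriv.
  replace ((z - x) * (/ (beta * z) - 3 / 2)) with (/ beta * ((z - x) / z) - 3 / 2 * (z - x))
    by (field; lra).
  replace ((z - x) * (/ (beta * x) - 3 / 2)) with (/ beta * ((z - x) / x) - 3 / 2 * (z - x))
    by (field; lra).
  assert (/ beta * ((z - x) / z) < / beta * (ln z - ln x)) by (apply Rmult_lt_compat_l; auto).
  assert (/ beta * (ln z - ln x) < / beta * ((z - x) / x)) by (apply Rmult_lt_compat_l; auto).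
  lra.
Qed.

Lemma G_increasing x z : 0 < x < z -> z <= l -> G x < G z.
Proof.
  intros hxz hzl; assert (h := G_secant_bounds x z hxz).
  assert (0 <= G_deriv z).
  { destruct (Req_dec z l) as [->|hne].
    - rewrite G_deriv_eq by lra; unfold Rdiv; rewrite Rminus_diag; lra.
    - left; apply G_deriv_pos; lra. }
  nra.
Qed.

Lemma G_decreasing x z : l <= x < z -> G z < G x.
Proof.
  intros hxz; assert (hl := l_beta_pos).
  assert (h := G_secant_bounds x z ltac:(lra)).
  assert (G_deriv x <= 0).
  { destruct (Req_dec x l) as [->|hne].
    - rewrite G_deriv_eq by lra; unfold Rdiv; rewrite Rminus_diag; lra.
    - left; apply G_deriv_neg; lra. }
  nra.
Qed.

Lemma G_continuous x : 0 < x -> continuity_pt G x.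
Proof.
  intros hx; apply derivable_continuous_pt; exists (G_deriv x).
  apply is_derive_Reals; unfold G_beta, G_deriv; auto_derive; [lra|field; lra].
Qed.

Lemma G_le_g x : 0 < x -> G x <= g.
Proof.
  intros hx; assert (hl := l_beta_pos); unfold g_beta.
  destruct (Rtotal_order x l) as [hlt|[->|hgt]].
  - left; apply G_increasing; lra.
  - lra.
  - left; apply G_decreasing; lra.
Qed.

Lemma H_branch_exists y : y <= g -> exists x, 0 < x <= l /\ G x = y.
Proof.
  intros hy; assert (hl := l_beta_pos).
  (* [G (exp (beta y)) = y - 3/2 exp (beta y) < y]. *)
  set (x0 := exp (beta * y)).
  assert (hx0 : 0 < x0) by apply exp_pos.
  assert (hGx0 : G x0 < y).
  { unfold G_beta, x0; rewrite ln_exp; field_simplify; [|lra].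
    assert (0 < exp (beta * y)) by apply exp_pos; lra. }
  assert (hx0l : x0 < l).
  { unfold x0; rewrite <- (exp_ln l) by lra; apply exp_increasing.
    unfold g_beta, G_beta in hy.
    apply Rmult_lt_reg_l with (/ beta); [apply Rinv_0_lt_compat; lra|].
    replace (/ beta * (beta * y)) with y by (field; lra); lra. }
  destruct (first_crossing G x0 l y) as [x [hx [hGx _]]]; [lra| |lra| |].
  - apply continuous_in_of_continuity_pt; intros x hx; apply G_continuous; lra.
  - unfold g_beta in hy; lra.
  - exists x; split; [lra|auto].
Qed.

Lemma K_branch_exists y : y <= g -> exists x, l <= x /\ G x = y.
Proof.
  intros hy; assert (hl := l_beta_pos); assert (hl3 := three_l_beta_lt_1).
  destruct (Req_dec y g) as [->|hne]; [exists l; split; [lra|reflexivity]|].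
  (* [G x1 < (x1 - 1) / beta - 3/2 x1 < - x1 < y]. *)
  set (x1 := 2 + Rabs y).
  assert (hy1 : - Rabs y <= y) by (generalize (Rle_abs (- y)); rewrite Rabs_Ropp; lra).
  assert (hGx1 : G x1 < y).
  { assert (hln : ln x1 < x1 - 1) by (apply ln_lt_sub1; unfold x1; generalize (Rabs_pos y); lra).
    assert (/ beta * ln x1 < / beta * (x1 - 1))
      by (apply Rmult_lt_compat_l; [apply Rinv_0_lt_compat|]; lra).
    assert (/ beta * (x1 - 1) < / 2 * (x1 - 1)).
    { apply Rmult_lt_compat_r; [unfold x1; generalize (Rabs_pos y); lra|].
      apply Rinv_lt_contravar; lra. }
    unfold G_beta; unfold x1 in *; lra. }
  destruct (first_crossing (fun x => - G x) l x1 (- y)) as [x [hx [hGx _]]].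
  - unfold x1; generalize (Rabs_pos y); lra.
  - apply continuous_in_opp, continuous_in_of_continuity_pt.
    intros x hx; apply G_continuous; lra.
  - fold g; lra.
  - lra.
  - exists x; split; lra.
Qed.

Lemma H_spec y : y <= g -> 0 < H_beta beta y <= l /\ G (H_beta beta y) = y.
Proof. intros hy; unfold H_beta; apply epsilon_spec, H_branch_exists, hy. Qed.

Lemma K_spec y : y <= g -> l <= K_beta beta y /\ G (K_beta beta y) = y.
Proof. intros hy; unfold K_beta; apply epsilon_spec, K_branch_exists, hy. Qed.

Lemma H_G x : 0 < x <= l -> H_beta beta (G x) = x.
Proof.
  intros hx; destruct (H_spec (G x) (G_le_g x ltac:(lra))) as [hH hGH].
  destruct (Rtotal_order (H_beta beta (G x)) x) as [hlt|[heq|hgt]]; auto; exfalso.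
  - assert (G (H_beta beta (G x)) < G x) by (apply G_increasing; lra); lra.
  - assert (G x < G (H_beta beta (G x))) by (apply G_increasing; lra); lra.
Qed.

Lemma K_G x : l <= x -> K_beta beta (G x) = x.
Proof.
  intros hx; assert (hl := l_beta_pos).
  destruct (K_spec (G x) (G_le_g x ltac:(lra))) as [hK hGK].
  destruct (Rtotal_order (K_beta beta (G x)) x) as [hlt|[heq|hgt]]; auto; exfalso.
  - assert (G x < G (K_beta beta (G x))) by (apply G_decreasing; lra); lra.
  - assert (G (K_beta beta (G x)) < G x) by (apply G_decreasing; lra); lra.
Qed.

Lemma H_lt_l y : y < g -> H_beta beta y < l.
Proof.
  intros hy; destruct (H_spec y ltac:(lra)) as [hH hGH].
  destruct (Req_dec (H_beta beta y) l) as [he|]; [|lra].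
  rewrite he in hGH; unfold g_beta in hy; lra.
Qed.

Lemma K_gt_l y : y < g -> l < K_beta beta y.
Proof.
  intros hy; destruct (K_spec y ltac:(lra)) as [hK hGK].
  destruct (Req_dec (K_beta beta y) l) as [he|]; [|lra].
  rewrite he in hGK; unfold g_beta in hy; lra.
Qed.

Lemma H_increasing y y' : y < y' -> y' <= g -> H_beta beta y < H_beta beta y'.
Proof.
  intros hyy hy'.
  destruct (H_spec y ltac:(lra)) as [hH hGH].
  destruct (H_spec y' hy') as [hH' hGH'].
  apply Rnot_le_lt; intro hle.
  assert (G (H_beta beta y') <= G (H_beta beta y)).
  { destruct hle as [hlt| ->]; [left; apply G_increasing|right]; lra. }
  lra.
Qed.

Lemma H_continuous : continuous_in (fun y => y <= g) (H_beta beta).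
Proof.
  apply (inverse_continuous_in G _ (fun x => 0 < x <= l)).
  - intros x z w hx hz hw; lra.
  - intros x z hx hz hxz; apply G_increasing; lra.
  - apply H_spec.
Qed.

Lemma K_continuous : continuous_in (fun y => y <= g) (K_beta beta).
Proof.
  apply (inverse_continuous_in_decr G _ (fun x => l <= x)).
  - intros x z w hx hz hw; lra.
  - intros x z hx hz hxz; apply G_decreasing; lra.
  - apply K_spec.
Qed.

(* If [b <= l/3] the sum is negative by sign inspection; otherwise [c > 1 - 2 b > 3 l - 2 b]
   and [G b = G c < G (3 l - 2 b)] contradicts [ln_sub_ln_three_sub_ge] at [s = b / l]. *)
Lemma critical_inv_G_deriv_sum_neg a b c :
  0 < a < b -> b < l -> l < c -> a + b + c = 1 -> G b = G c ->
  / G_deriv a + / G_deriv b + / G_deriv c < 0.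
Proof.
  intros ha hbl hlc hsum hG.
  assert (hl := l_beta_pos); assert (hl3 := three_l_beta_lt_1).
  rewrite !inv_G_deriv by lra.
  destruct (Rle_dec b (l / 3)) as [hsmall|hbig].
  - replace (2 * a / (3 * (l - a)) + 2 * b / (3 * (l - b)) + 2 * c / (3 * (l - c)))
      with (2 / 3 * (l * (a - b) / ((l - a) * (l - b))
                     + (2 * b * l + c * (l - 3 * b)) / ((l - b) * (l - c))))
      by (field; lra).
    assert (l * (a - b) / ((l - a) * (l - b)) < 0)
      by (apply Rdiv_neg_pos; [|apply Rmult_lt_0_compat]; nra).
    assert ((2 * b * l + c * (l - 3 * b)) / ((l - b) * (l - c)) <= 0).
    { replace ((2 * b * l + c * (l - 3 * b)) / ((l - b) * (l - c)))
        with ((2 * b * l + c * (l - 3 * b)) / ((l - b) * (c - l)) * -1) by (field; lra).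
      assert (0 <= (2 * b * l + c * (l - 3 * b)) / ((l - b) * (c - l)))
        by (apply Rdiv_le_0_compat; [nra|apply Rmult_lt_0_compat; lra]).
      lra. }
    lra.
  - exfalso.
    assert (hGc : G c < G (3 * l - 2 * b)) by (apply G_decreasing; lra).
    set (s := b / l).
    assert (eb : b = s * l) by (unfold s; field; lra).
    assert (hs : 1 / 3 <= s <= 1) by (rewrite eb in hbig, hbl; split; nra).
    assert (hkey := ln_sub_ln_three_sub_ge s hs).
    assert (e : G (3 * l - 2 * b) - G b
                = 3 / 2 * l * ((ln (3 - 2 * s) - ln s) - (3 - 3 * s))).
    { unfold G_beta; rewrite eb.
      replace (3 * l - 2 * (s * l)) with ((3 - 2 * s) * l) by ring.
      rewrite !ln_mult, inv_beta_eq by lra; ring. }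
    assert (0 <= 3 / 2 * l * ((3 - 3 * s) - (ln (3 - 2 * s) - ln s)))
      by (apply Rmult_le_pos; lra).
    lra.
Qed.

Lemma inv_G_deriv_sum_neg_near a b c :
  0 < a < l -> 0 < b < l -> l < c -> / G_deriv a + / G_deriv b + / G_deriv c < 0 ->
  exists eta0, 0 < eta0 /\ forall eta, 0 < eta < eta0 ->
    a + eta < l /\ b + eta < l /\
    / G_deriv (a + eta) + / G_deriv (b + eta) + / G_deriv (c + eta) < 0.
Proof.
  intros ha hb hc hneg.
  set (Phi := fun eta => 2 * (a + eta) / (3 * (l - (a + eta)))
                       + 2 * (b + eta) / (3 * (l - (b + eta)))
                       + 2 * (c + eta) / (3 * (l - (c + eta)))).
  assert (ePhi : forall eta, 0 <= eta -> a + eta < l -> b + eta < l ->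
            / G_deriv (a + eta) + / G_deriv (b + eta) + / G_deriv (c + eta) = Phi eta).
  { intros eta heta ha' hb'; unfold Phi; rewrite !inv_G_deriv by lra; reflexivity. }
  assert (hPhi0 : Phi 0 < 0) by (rewrite <- ePhi, !Rplus_0_r by lra; exact hneg).
  assert (hcont : continuity_pt Phi 0).
  { apply derivable_continuous_pt; eexists; apply is_derive_Reals; unfold Phi.
    auto_derive; [repeat split; lra|reflexivity]. }
  destruct (hcont (- Phi 0) ltac:(lra)) as [d [hd hd']].
  exists (Rmin d (Rmin (l - a) (l - b))); split.
  { repeat apply Rmin_glb_lt; lra. }
  intros eta [heta hetad]; destruct (lt_Rmin3 _ _ _ _ hetad) as [hd1 [ha1 hb1]].
  split; [lra|split; [lra|]].
  rewrite ePhi by lra.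
  assert (hnear : Rabs (Phi eta - Phi 0) < - Phi 0).
  { apply hd'; split; [split; [exact I|lra]|].
    simpl; unfold R_dist; rewrite Rminus_0_r, Rabs_right; lra. }
  rewrite Rabs_lt_between in hnear; lra.
Qed.

Lemma G_secant_gt_deriv x p eta : 0 < x -> 0 < p -> x <> p -> Rabs (x - p) < eta ->
  G_deriv (p + eta) < (G x - G p) / (x - p).
Proof.
  intros hx hp hxp hd; rewrite Rabs_lt_between in hd.
  destruct (Rlt_dec p x) as [hlt|hge].
  - destruct (G_secant_bounds p x ltac:(lra)) as [hsec _].
    apply Rlt_trans with (G_deriv x); [apply G_deriv_decreasing; lra|].
    apply Rmult_lt_reg_r with (x - p); [lra|].
    replace ((G x - G p) / (x - p) * (x - p)) with (G x - G p) by (field; lra); lra.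
  - destruct (G_secant_bounds x p ltac:(lra)) as [hsec _].
    apply Rlt_trans with (G_deriv p); [apply G_deriv_decreasing; lra|].
    apply Rmult_lt_reg_r with (p - x); [lra|].
    replace ((G x - G p) / (x - p) * (p - x)) with (G p - G x) by (field; lra); lra.
Qed.

(* [q] is the inverse secant slope: the secant slope exceeds [G_deriv (p + eta)] and has
   the same sign on either branch. *)
Lemma inverse_increment_lt x p eta : 0 < x -> 0 < p -> G x <> G p -> Rabs (x - p) < eta ->
  p + eta < l \/ (l <= x /\ l <= p) ->
  exists q, q < / G_deriv (p + eta) /\ x - p = (G x - G p) * q.
Proof.
  intros hx hp hGxp hd hbranch.
  assert (hxp : x <> p) by (intros ->; auto).
  assert (hl := l_beta_pos); assert (heta : 0 < eta) by (generalize (Rabs_pos (x - p)); lra).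
  set (s := (G x - G p) / (x - p)).
  assert (hs : G_deriv (p + eta) < s) by (apply G_secant_gt_deriv; auto).
  assert (hsign : 0 < G_deriv (p + eta) * s).
  { destruct hbranch as [hinc|[hxl hpl]].
    - assert (0 < G_deriv (p + eta)) by (apply G_deriv_pos; lra); nra.
    - assert (G_deriv (p + eta) < 0) by (apply G_deriv_neg; lra).
      assert (s < 0); [|nra].
      unfold s; destruct (Rlt_dec p x) as [hlt|hge].
      + assert (G x < G p) by (apply G_decreasing; lra).
        apply Rdiv_neg_pos; lra.
      + assert (G p < G x) by (apply G_decreasing; lra).
        apply Rdiv_pos_neg; lra. }
  exists (/ s); split; [apply Rinv_lt_contravar; auto|].
  unfold s; field; split; [lra|contradict hGxp; lra].
Qed.

Lemma branch_increments_sum_neg x0 x1 x2 p0 p1 p2 t eta :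
  0 < x0 -> 0 < x1 -> 0 < p0 -> 0 < p1 -> l <= x2 -> l <= p2 ->
  G x0 - G p0 = t -> G x1 - G p1 = t -> G x2 - G p2 = t -> t <> 0 ->
  Rabs (x0 - p0) < eta -> Rabs (x1 - p1) < eta -> Rabs (x2 - p2) < eta ->
  p0 + eta < l -> p1 + eta < l ->
  / G_deriv (p0 + eta) + / G_deriv (p1 + eta) + / G_deriv (p2 + eta) < 0 ->
  ((x0 - p0) + (x1 - p1) + (x2 - p2)) * t < 0.
Proof.
  intros hx0 hx1 hp0 hp1 hx2 hp2 ht0 ht1 ht2 ht hd0 hd1 hd2 hl0 hl1 hslopes.
  assert (hl := l_beta_pos).
  destruct (inverse_increment_lt x0 p0 eta hx0 hp0 ltac:(lra) hd0 (or_introl hl0))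
    as [q0 [hq0 e0]].
  destruct (inverse_increment_lt x1 p1 eta hx1 hp1 ltac:(lra) hd1 (or_introl hl1))
    as [q1 [hq1 e1]].
  destruct (inverse_increment_lt x2 p2 eta ltac:(lra) ltac:(lra) ltac:(lra) hd2
              ltac:(right; lra)) as [q2 [hq2 e2]].
  rewrite e0, e1, e2, ht0, ht1, ht2.
  replace ((t * q0 + t * q1 + t * q2) * t) with (t ^ 2 * (q0 + q1 + q2)) by ring.
  assert (0 < t ^ 2) by (apply pow2_gt_0; auto).
  nra.
Qed.

Variable r : R.
Hypothesis hr : 0 < r.

(* The equation of the theorem says that [(H (y - 3r/2), H y, K y)] lies on the simplex. *)
Definition coord_sum (y : R) : R :=
  H_beta beta (y - 3 * r / 2) + H_beta beta y + K_beta beta y.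

Lemma coord_sum_g_lt_1 : coord_sum g < 1.
Proof.
  assert (hl3 := three_l_beta_lt_1).
  assert (H_beta beta g = l) by (unfold g_beta; apply H_G; split; [apply l_beta_pos|lra]).
  assert (K_beta beta g = l) by (unfold g_beta; apply K_G; lra).
  assert (H_beta beta (g - 3 * r / 2) < l) by (apply H_lt_l; lra).
  unfold coord_sum; lra.
Qed.

Lemma coord_sum_continuous : continuous_in (fun y => y <= g) coord_sum.
Proof.
  unfold coord_sum; apply continuous_in_plus; [apply continuous_in_plus|].
  - apply (continuous_in_shift (fun y => y <= g)); [intros; lra|apply H_continuous].
  - apply H_continuous.
  - apply K_continuous.
Qed.

Lemma root_lt_g y0 : y0 <= g -> coord_sum y0 = 1 -> y0 < g.
Proof.
  intros hy0 hroot; destruct (Req_dec y0 g) as [->|]; [|lra].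
  generalize coord_sum_g_lt_1; lra.
Qed.

Lemma root_slope_margin y0 : y0 <= g -> coord_sum y0 = 1 ->
  exists eta0, 0 < eta0 /\ forall eta, 0 < eta < eta0 ->
    H_beta beta (y0 - 3 * r / 2) + eta < l /\ H_beta beta y0 + eta < l /\
    / G_deriv (H_beta beta (y0 - 3 * r / 2) + eta) + / G_deriv (H_beta beta y0 + eta)
      + / G_deriv (K_beta beta y0 + eta) < 0.
Proof.
  intros hy0 hroot; assert (hg := root_lt_g y0 hy0 hroot).
  destruct (H_spec (y0 - 3 * r / 2) ltac:(lra)) as [[hp0 _] hG0].
  destruct (H_spec y0 hy0) as [[hp1 _] hG1].
  destruct (K_spec y0 hy0) as [_ hG2].
  assert (H_beta beta (y0 - 3 * r / 2) < H_beta beta y0) by (apply H_increasing; lra).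
  assert (H_beta beta y0 < l) by (apply H_lt_l; lra).
  assert (l < K_beta beta y0) by (apply K_gt_l; lra).
  unfold coord_sum in hroot.
  apply inv_G_deriv_sum_neg_near; try lra.
  apply critical_inv_G_deriv_sum_neg; try lra; congruence.
Qed.

Lemma coord_sum_crosses_down y0 : y0 <= g -> coord_sum y0 = 1 ->
  exists del, 0 < del /\ forall y, y <= g -> Rabs (y - y0) < del -> y <> y0 ->
    (coord_sum y - 1) * (y - y0) < 0.
Proof.
  intros hy0 hroot; assert (hg := root_lt_g y0 hy0 hroot).
  destruct (root_slope_margin y0 hy0 hroot) as [eta0 [heta0 hmargin]].
  set (eta := eta0 / 2).
  destruct (hmargin eta ltac:(unfold eta; lra)) as [hl0 [hl1 hslopes]].
  destruct (H_continuous (y0 - 3 * r / 2) ltac:(lra) eta ltac:(unfold eta; lra))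
    as [d0 [hd0 hc0]].
  destruct (H_continuous y0 hy0 eta ltac:(unfold eta; lra)) as [d1 [hd1 hc1]].
  destruct (K_continuous y0 hy0 eta ltac:(unfold eta; lra)) as [d2 [hd2 hc2]].
  exists (Rmin d0 (Rmin d1 d2)); split; [repeat apply Rmin_glb_lt; lra|].
  intros y hy hyd hne.
  destruct (lt_Rmin3 _ _ _ _ hyd) as [hyd0 [hyd1 hyd2]].
  destruct (H_spec (y0 - 3 * r / 2) ltac:(lra)) as [[hp0 _] hGp0].
  destruct (H_spec y0 hy0) as [[hp1 _] hGp1].
  destruct (K_spec y0 hy0) as [hp2 hGp2].
  destruct (H_spec (y - 3 * r / 2) ltac:(lra)) as [[hx0 _] hGx0].
  destruct (H_spec y hy) as [[hx1 _] hGx1].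
  destruct (K_spec y hy) as [hx2 hGx2].
  replace (coord_sum y - 1) with (coord_sum y - coord_sum y0) by lra; unfold coord_sum.
  replace (H_beta beta (y - 3 * r / 2) + H_beta beta y + K_beta beta y
           - (H_beta beta (y0 - 3 * r / 2) + H_beta beta y0 + K_beta beta y0))
    with ((H_beta beta (y - 3 * r / 2) - H_beta beta (y0 - 3 * r / 2))
          + (H_beta beta y - H_beta beta y0) + (K_beta beta y - K_beta beta y0)) by ring.
  apply branch_increments_sum_neg with eta; auto; try lra.
  - apply hc0; [lra|]; replace (y - 3 * r / 2 - (y0 - 3 * r / 2)) with (y - y0) by ring; auto.
Qed.

(* Just right of a root the sum is below 1, so the first return to 1 after that point
   would have to be an upward crossing. *)
Lemma coord_sum_root_unique y1 y2 : y1 <= g -> y2 <= g ->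
  coord_sum y1 = 1 -> coord_sum y2 = 1 -> y1 = y2.
Proof.
  assert (hnlt : forall a b, a <= g -> b <= g -> coord_sum a = 1 -> coord_sum b = 1 -> ~ a < b).
  { intros a b ha hb hra hrb hab.
    destruct (coord_sum_crosses_down a ha hra) as [d [hd hcross]].
    set (u := a + Rmin d (b - a) / 2).
    assert (hm : 0 < Rmin d (b - a) <= d /\ Rmin d (b - a) <= b - a)
      by (split; [split; [apply Rmin_glb_lt|apply Rmin_l]|apply Rmin_r]; lra).
    assert (hu : coord_sum u < 1).
    { assert (h := hcross u ltac:(unfold u; lra)
                      ltac:(unfold u; rewrite Rabs_right; lra) ltac:(unfold u; lra)).
      assert (0 < u - a) by (unfold u; lra); nra. }
    destruct (first_crossing coord_sum u b 1) as [z [hz [hrz hbelow]]]; [unfold u; lra| |lra|lra|].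
    { apply (continuous_in_subset (fun y => y <= g)); [intros; lra|apply coord_sum_continuous]. }
    destruct (coord_sum_crosses_down z ltac:(lra) hrz) as [d' [hd' hcross']].
    set (w := Rmax u (z - d' / 2)).
    assert (u <= w < z) by (unfold w; split; [apply Rmax_l|apply Rmax_lub_lt]; lra).
    assert (z - d' / 2 <= w) by apply Rmax_r.
    assert (hw1 := hbelow w ltac:(lra)).
    assert (hw2 := hcross' w ltac:(lra) ltac:(rewrite Rabs_left; lra) ltac:(lra)).
    nra. }
  intros h1 h2 hr1 hr2.
  destruct (Rtotal_order y1 y2) as [hlt|[heq|hgt]]; auto; exfalso.
  - exact (hnlt y1 y2 h1 h2 hr1 hr2 hlt).
  - exact (hnlt y2 y1 h2 h1 hr2 hr1 hgt).
Qed.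

(* At [G 1 <= g] the sum exceeds [K (G 1) = 1]. *)
Lemma coord_sum_root_exists : exists y, y <= g /\ coord_sum y = 1.
Proof.
  assert (hl := l_beta_pos); assert (hl3 := three_l_beta_lt_1).
  assert (hlo : G 1 <= g) by (apply G_le_g; lra).
  assert (hK : K_beta beta (G 1) = 1) by (apply K_G; lra).
  assert (hsum : 1 < coord_sum (G 1)).
  { destruct (H_spec (G 1 - 3 * r / 2) ltac:(lra)) as [[? _] _].
    destruct (H_spec (G 1) hlo) as [[? _] _].
    unfold coord_sum; lra. }
  assert (hg := coord_sum_g_lt_1).
  destruct (first_crossing (fun y => - coord_sum y) (G 1) g (- 1)) as [y [hy [hry _]]];
    [lra| |lra|lra|].
  - apply continuous_in_opp, (continuous_in_subset (fun y => y <= g)); [intros; lra|].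
    apply coord_sum_continuous.
  - exists y; split; lra.
Qed.

Definition F_gap (x p : R) : R := / beta * (x * (ln x - ln p) - (x - p)) - 3 / 4 * (x - p) ^ 2.

Lemma F_gap_ge x p eta : 0 < x -> 0 < p -> Rabs (x - p) <= eta ->
  / 2 * G_deriv (p + eta) * (x - p) ^ 2 <= F_gap x p.
Proof.
  intros hx hp hd; assert (heta : 0 <= eta) by (generalize (Rabs_pos (x - p)); lra).
  assert (hdiv := xlnx_divergence_ge x p eta hx hp hd).
  assert (/ beta * ((x - p) ^ 2 / (2 * (p + eta)))
          <= / beta * (x * (ln x - ln p) - (x - p)))
    by (apply Rmult_le_compat_l; [left; apply Rinv_0_lt_compat; lra|exact hdiv]).
  unfold F_gap, G_deriv.
  replace (/ 2 * (/ (beta * (p + eta)) - 3 / 2) * (x - p) ^ 2)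
    with (/ beta * ((x - p) ^ 2 / (2 * (p + eta))) - 3 / 4 * (x - p) ^ 2) by (field; lra).
  lra.
Qed.

(* The relations [G p0 + 3 r / 2 = G p1 = G p2] are the Lagrange conditions for [F] on
   the simplex, so the linear part of [F x - F p] cancels. *)
Lemma F_beta_sub_at_critical x1 x2 p0 p1 p2 :
  0 < 1 - x1 - x2 -> 0 < x1 -> 0 < x2 -> 0 < p0 -> 0 < p1 -> 0 < p2 -> p0 + p1 + p2 = 1 ->
  G p0 + 3 * r / 2 = G p1 -> G p2 = G p1 ->
  F_beta beta x1 x2 r - F_beta beta p1 p2 r
  = F_gap (1 - x1 - x2) p0 + F_gap x1 p1 + F_gap x2 p2.
Proof.
  intros hx0 hx1 hx2 hp0 hp1 hp2 hsum hG0 hG2.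
  rewrite !F_beta_eq by lra.
  replace (1 - p1 - p2) with p0 by lra.
  assert (hln : forall p, ln p = beta * (G p + 3 / 2 * p)) by (intros; unfold G_beta; field; lra).
  unfold F_gap; rewrite (hln p0), (hln p1), (hln p2), hG2.
  replace (G p0) with (G p1 - 3 * r / 2) by lra.
  replace p0 with (1 - p1 - p2) by lra.
  field; lra.
Qed.

Lemma F_local_min_of_critical p0 p1 p2 eta :
  0 < p0 -> 0 < p1 -> p0 + p1 + p2 = 1 -> G p0 + 3 * r / 2 = G p1 -> G p2 = G p1 ->
  0 < eta -> p0 + eta < l -> p1 + eta < l -> l < p2 ->
  / G_deriv (p0 + eta) + / G_deriv (p1 + eta) + / G_deriv (p2 + eta) < 0 ->
  local_min_F beta r p1 p2.
Proof.
  intros hp0 hp1 hsum hG0 hG2 heta hl0 hl1 hl2 hslopes.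
  assert (hl := l_beta_pos).
  split; [unfold in_Xi; lra|].
  set (m := Rmin eta (Rmin p0 (Rmin p1 p2))).
  assert (hm : 0 < m /\ m <= eta /\ m <= p0 /\ m <= p1 /\ m <= p2).
  { unfold m; repeat split;
      repeat first [apply Rmin_glb_lt | apply Rmin_l
                   | eapply Rle_trans; [apply Rmin_r|]]; lra. }
  exists (m / 2); split; [lra|].
  intros x1 x2 _ hd.
  rewrite <- !Rsqr_pow2 in hd.
  destruct (triangle_rectangle_lt _ _ _ hd) as [hd1 hd2].
  rewrite (Rabs_right (m / 2)) in hd1, hd2 by lra.
  set (x0 := 1 - x1 - x2).
  assert (hd0 : Rabs (x0 - p0) < m).
  { replace (x0 - p0) with (- ((x1 - p1) + (x2 - p2))) by (unfold x0; lra).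
    rewrite Rabs_Ropp; eapply Rle_lt_trans; [apply Rabs_triang|lra]. }
  rewrite Rabs_lt_between in hd0, hd1, hd2.
  enough (0 <= F_beta beta x1 x2 r - F_beta beta p1 p2 r) by lra.
  rewrite (F_beta_sub_at_critical x1 x2 p0 p1 p2) by (try fold x0; lra).
  fold x0.
  assert (hq := weighted_squares_nonneg (G_deriv (p0 + eta)) (G_deriv (p1 + eta))
                  (G_deriv (p2 + eta)) (x0 - p0) (x1 - p1) (x2 - p2)
                  ltac:(apply G_deriv_pos; lra) ltac:(apply G_deriv_pos; lra)
                  ltac:(apply G_deriv_neg; lra) hslopes ltac:(unfold x0; lra)).
  pose proof (F_gap_ge x0 p0 eta ltac:(lra) hp0 ltac:(apply Rabs_le; lra)).
  pose proof (F_gap_ge x1 p1 eta ltac:(lra) hp1 ltac:(apply Rabs_le; lra)).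
  pose proof (F_gap_ge x2 p2 eta ltac:(lra) ltac:(lra) ltac:(apply Rabs_le; lra)).
  lra.
Qed.

Lemma local_min_at_root y0 : y0 <= g -> coord_sum y0 = 1 ->
  local_min_F beta r (H_beta beta y0) (K_beta beta y0).
Proof.
  intros hy0 hroot; assert (hg := root_lt_g y0 hy0 hroot).
  destruct (root_slope_margin y0 hy0 hroot) as [eta0 [heta0 hmargin]].
  destruct (hmargin (eta0 / 2) ltac:(lra)) as [hl0 [hl1 hslopes]].
  destruct (H_spec (y0 - 3 * r / 2) ltac:(lra)) as [[hp0 _] hG0].
  destruct (H_spec y0 hy0) as [[hp1 _] hG1].
  destruct (K_spec y0 hy0) as [_ hG2].
  apply (F_local_min_of_critical _ _ _ (eta0 / 2) hp0 hp1); try assumption.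
  - rewrite hG0, hG1; lra.
  - congruence.
  - lra.
  - apply K_gt_l; lra.
Qed.

End Potential.

Theorem lemma5p8 (beta : R) (hbeta : 2 < beta) (r : R) (hr : 0 < r) :
  exists y2,
    (y2 <= g_beta beta /\
     H_beta beta (y2 - 3 * r / 2) + H_beta beta y2 + K_beta beta y2 = 1) /\
    (forall y, y <= g_beta beta ->
       H_beta beta (y - 3 * r / 2) + H_beta beta y + K_beta beta y = 1 ->
       y = y2) /\
    local_min_F beta r (H_beta beta y2) (K_beta beta y2).
Proof.
  destruct (coord_sum_root_exists beta hbeta r hr) as [y2 [hy2 hroot]].
  exists y2; split; [split; [exact hy2|exact hroot]|split].
  - intros y hy hroot'.
    exact (coord_sum_root_unique beta hbeta r hr y y2 hy hy2 hroot' hroot).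
  - exact (local_min_at_root beta hbeta r hr y2 hy2 hroot).
Qed.
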